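(* Let $G$ be a topological group, let $G'$ be a separated topological group and let $f_n\colon G\to G'$, $n\in\mathbb{N}$, be a sequence of homomorphisms of topological groups. Then the following are equivalent: (a) the sequence $(f_n)_n$ converges continuously to a homomorphism $f\colon G\to G'$; (b) there exists a homomorphism of topological groups $f\colon G\to G'$ such that the sequence $(f_n-f)_n$ converges continuously to the zero homomorphism; (c) the sequence $(f_n)_n$ converges pointwise to a homomorphism of topological groups $f\colon G\to G'$, and for every open subgroup $H'$ of $G'$ there exist an open subgroup $H$ of $G$ and an integer $n_0\ge0$ such that $(f_n-f)(H)\subseteq H'$ for every $n\ge n_0$. In particular, if a sequence of homomorphisms of topological groups $(f_n)_n$ converges continuously to a homomorphism $f\colon G\to G'$, then $f$ is continuous.
   Context: Topological groups are abelian groups with a linear topology admitting a countable fundamental system of neighbourhoods of $0$ consisting of open subgroups; a homomorphism of topological groups is a continuous group homomorphism; separated means Hausdorff. For group homomorphisms $f_n,f\colon G\to G'$: $(f_n)$ converges pointwise to $f$ if for every $g\in G$ and open subgroup $H'$ of $G'$ there is $n_0$ with $f_n(g)-f(g)\in H'$ for $n\ge n_0$; $(f_n)$ converges continuously to $f$ if every $f_n$ is continuous and for every $g\in G$ and open subgroup $H'$ of $G'$ there exist an open subgroup $H$ of $G$ and $n_0$ such that $f_n(g+x)-f(g+x)\in H'$ for all $x\in H$ and all $n\ge n_0$. *)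

(* abelian groups are zmodType's; the linear topology is
   given by a countable fundamental system of neighbourhoods of 0 made of
   subgroups (a filter base), from which the open sets are defined. *)
From mathcomp Require Import all_boot all_algebra.
Set Implicit Arguments. Unset Strict Implicit. Unset Printing Implicit Defensive.
Import GRing.Theory.
Local Open Scope ring_scope.

Definition subgroup (G : zmodType) (H : G -> Prop) : Prop :=
  H 0 /\ (forall x y, H x -> H y -> H (x - y)).

Record lintop (G : zmodType) := LinTop {
  nbh0 : nat -> G -> Prop;
  nbh0_subgroup : forall n, subgroup (nbh0 n);
  nbh0_filter : forall n m, exists k, forall x, nbh0 k x -> nbh0 n x /\ nbh0 m x
}.

Definition is_open (G : zmodType) (T : lintop G) (A : G -> Prop) : Prop :=
  forall x, A x -> exists n, forall y, nbh0 T n y -> A (x + y).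

Definition open_subgroup (G : zmodType) (T : lintop G) (H : G -> Prop) : Prop :=
  subgroup H /\ is_open T H.

Definition separated (G : zmodType) (T : lintop G) : Prop :=
  forall x y : G, x <> y -> exists A B : G -> Prop,
    [/\ is_open T A, is_open T B, A x, B y & forall z, ~ (A z /\ B z)].

Definition grp_hom (G G' : zmodType) (f : G -> G') : Prop :=
  forall x y, f (x + y) = f x + f y.

Definition top_continuous (G G' : zmodType) (T : lintop G) (T' : lintop G')
  (f : G -> G') : Prop :=
  forall A, is_open T' A -> is_open T (fun x => A (f x)).

Definition top_hom (G G' : zmodType) (T : lintop G) (T' : lintop G')
  (f : G -> G') : Prop := grp_hom f /\ top_continuous T T' f.

Definition conv_pointwise (G G' : zmodType) (T' : lintop G')
  (fn : nat -> G -> G') (f : G -> G') : Prop :=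
  forall g H', open_subgroup T' H' ->
    exists n0, forall n, (n0 <= n)%N -> H' (fn n g - f g).

Definition conv_continuous (G G' : zmodType) (T : lintop G) (T' : lintop G')
  (fn : nat -> G -> G') (f : G -> G') : Prop :=
  (forall n, top_continuous T T' (fn n)) /\
  forall g H', open_subgroup T' H' ->
    exists H n0, open_subgroup T H /\
      forall x n, H x -> (n0 <= n)%N -> H' (fn n (g + x) - f (g + x)).

(* A sequence of homomorphisms f_n converges continuously to f exactly when
   f_n - f does so to 0, because the condition only involves f_n - f.  For
   homomorphisms, (f_n - f)(g + x) = (f_n - f)(g) + (f_n - f)(x), so continuous
   convergence at g splits into pointwise convergence at g and continuous
   convergence at 0, which is the uniform condition of (c).  Finally, continuous
   convergence at 0 makes f continuous: on a small enough open subgroup both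
   f_n0 and f_n0 - f take values in H', hence so does f. *)
From mathcomp Require Import all_boot all_algebra.
Set Implicit Arguments. Unset Strict Implicit. Unset Printing Implicit Defensive.
Import GRing.Theory.
Local Open Scope ring_scope.

Section Subgroup.
Variables (K : zmodType) (H : K -> Prop).
Hypothesis sgH : subgroup H.

Lemma subgroup0 : H 0.
Proof. by case: sgH. Qed.

Lemma subgroupB x y : H x -> H y -> H (x - y).
Proof. exact: sgH.2. Qed.

Lemma subgroupN x : H x -> H (- x).
Proof. by move=> Hx; rewrite -sub0r; apply: subgroupB subgroup0 Hx. Qed.

Lemma subgroupD x y : H x -> H y -> H (x + y).
Proof. by move=> Hx Hy; rewrite -[y]opprK; apply/subgroupB/subgroupN. Qed.

End Subgroup.

Section OpenSubgroup.
Variables (K : zmodType) (S : lintop K).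

Lemma nbh0_open_subgroup n : open_subgroup S (nbh0 S n).
Proof.
split=> [|x Hx]; first exact: nbh0_subgroup.
by exists n => y; apply: subgroupD; first exact: nbh0_subgroup.
Qed.

Lemma open_subgroup_nbh0 H : open_subgroup S H ->
  exists m, forall y, nbh0 S m y -> H y.
Proof.
move=> [sgH openH]; have [m Hm] := openH _ (subgroup0 sgH).
by exists m => y /Hm; rewrite add0r.
Qed.

End OpenSubgroup.

Section Homomorphisms.
Variables (G G' : zmodType) (T : lintop G) (T' : lintop G').

Lemma grp_hom0 (f : G -> G') : grp_hom f -> f 0 = 0.
Proof. by move=> hom_f; apply: (addrI (f 0)); rewrite -hom_f !addr0. Qed.

Lemma grp_homB (f g : G -> G') :
  grp_hom f -> grp_hom g -> grp_hom (fun x => f x - g x).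
Proof. by move=> hom_f hom_g x y; rewrite hom_f hom_g opprD addrACA. Qed.

Lemma hom_continuousP (f : G -> G') : grp_hom f ->
  top_continuous T T' f <->
  (forall H', open_subgroup T' H' -> exists m, forall y, nbh0 T m y -> H' (f y)).
Proof.
move=> hom_f; split=> [cont_f H' [sgH' openH'] | cont0_f A openA x Ax].
  have H'f0 : H' (f 0) by rewrite grp_hom0 //; apply: subgroup0.
  have [m Hm] := cont_f _ openH' 0 H'f0.
  by exists m => y /Hm; rewrite add0r.
have [n Hn] := openA _ Ax; have [m Hm] := cont0_f _ (nbh0_open_subgroup T' n).
by exists m => y /Hm; rewrite hom_f; apply: Hn.
Qed.

Lemma hom_continuousB (f g : G -> G') : grp_hom f -> grp_hom g ->
  top_continuous T T' f -> top_continuous T T' g ->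
  top_continuous T T' (fun x => f x - g x).
Proof.
move=> hom_f hom_g /(hom_continuousP hom_f) cont_f /(hom_continuousP hom_g) cont_g.
apply/hom_continuousP => [|H' oH']; first exact: grp_homB.
have [m1 Hm1] := cont_f _ oH'; have [m2 Hm2] := cont_g _ oH'.
have [m Hm] := nbh0_filter T m1 m2.
exists m => y /Hm[y1 y2]; exact: (subgroupB oH'.1 (Hm1 _ y1) (Hm2 _ y2)).
Qed.

Definition conv_uniform_near0 (fn : nat -> G -> G') (f : G -> G') : Prop :=
  forall H', open_subgroup T' H' ->
    exists H n0, open_subgroup T H /\
      forall n x, (n0 <= n)%N -> H x -> H' (fn n x - f x).

Variables (fn : nat -> G -> G') (f : G -> G').

Lemma conv_continuous_pointwise :
  conv_continuous T T' fn f -> conv_pointwise T' fn f.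
Proof.
move=> [_ cc] g H' oH'; have [H [n0 [oH Hn0]]] := cc g H' oH'.
by exists n0 => n le_n0n; rewrite -[g]addr0; apply: Hn0 (subgroup0 oH.1) le_n0n.
Qed.

Lemma conv_continuous_uniform_near0 :
  conv_continuous T T' fn f -> conv_uniform_near0 fn f.
Proof.
move=> [_ cc] H' oH'; have [H [n0 [oH Hn0]]] := cc 0 H' oH'.
by exists H, n0; split=> // n x le_n0n Hx; rewrite -[x]add0r; apply: Hn0.
Qed.

Lemma conv_continuous_subr : (forall n, top_continuous T T' (fn n)) ->
  (forall n, top_continuous T T' (fun x => fn n x - f x)) ->
  conv_continuous T T' fn f <->
  conv_continuous T T' (fun n x => fn n x - f x) (fun _ => 0).
Proof.
move=> cont_fn cont_fn_f.
by split=> -[_ cc]; split=> // g H' /(cc g)[H [n0 [oH Hn0]]];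
  exists H, n0; split=> // x n Hx /(Hn0 _ _ Hx); rewrite subr0.
Qed.

Hypothesis hom_fn : forall n, grp_hom (fn n).
Hypothesis cont_fn : forall n, top_continuous T T' (fn n).
Hypothesis hom_f : grp_hom f.
Arguments hom_fn : clear implicits.
Arguments cont_fn : clear implicits.

Lemma pointwise_uniform_near0_conv_continuous :
  conv_pointwise T' fn f -> conv_uniform_near0 fn f -> conv_continuous T T' fn f.
Proof.
move=> pw un; split=> // g H' oH'.
have [n1 Hn1] := pw g H' oH'; have [H [n2 [oH Hn2]]] := un H' oH'.
exists H, (maxn n1 n2); split=> // x n Hx; rewrite geq_max => /andP[le_n1n le_n2n].
rewrite (grp_homB (hom_fn n) hom_f).
exact: (subgroupD oH'.1 (Hn1 _ le_n1n) (Hn2 _ _ le_n2n Hx)).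
Qed.

Lemma conv_continuous_lim_continuous :
  conv_continuous T T' fn f -> top_continuous T T' f.
Proof.
move=> /conv_continuous_uniform_near0 un; apply/hom_continuousP => // H' oH'.
have [H [n0 [oH Hn0]]] := un H' oH'.
have [m1 Hm1] := open_subgroup_nbh0 oH.
have /(hom_continuousP (hom_fn n0))/(_ _ oH')[m2 Hm2] := cont_fn n0.
have [m Hm] := nbh0_filter T m1 m2.
exists m => y /Hm[y1 y2]; rewrite -[f y](subKr (fn n0 y)).
exact: (subgroupB oH'.1 (Hm2 _ y2) (Hn0 _ _ (leqnn n0) (Hm1 _ y1))).
Qed.

End Homomorphisms.

Theorem lemma1p9 (G G' : zmodType) (T : lintop G) (T' : lintop G')
  (fn : nat -> G -> G') :
  separated T' ->
  (forall n, top_hom T T' (fn n)) ->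
  ( ((exists f, grp_hom f /\ conv_continuous T T' fn f) <->
     (exists f, top_hom T T' f /\
        conv_continuous T T' (fun n x => fn n x - f x) (fun _ => 0))) /\
    ((exists f, grp_hom f /\ conv_continuous T T' fn f) <->
     (exists f, top_hom T T' f /\ conv_pointwise T' fn f /\
        forall H', open_subgroup T' H' ->
          exists H n0, open_subgroup T H /\
            forall n x, (n0 <= n)%N -> H x -> H' (fn n x - f x))) ) /\
  (forall f, grp_hom f -> conv_continuous T T' fn f -> top_continuous T T' f).
Proof.
move=> _ top_hom_fn.
have hom_fn n := (top_hom_fn n).1; have cont_fn n := (top_hom_fn n).2.
have cont_lim f : grp_hom f -> conv_continuous T T' fn f -> top_continuous T T' f.
  exact: conv_continuous_lim_continuous.
have conv_subr f : top_hom T T' f -> conv_continuous T T' fn f <->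
    conv_continuous T T' (fun n x => fn n x - f x) (fun _ => 0).
  move=> [hom_f cont_f]; apply: conv_continuous_subr => // n.
  exact: hom_continuousB.
split; last exact: cont_lim.
split; split.
- move=> [f [hom_f cc]]; have top_hom_f : top_hom T T' f by split; last exact: cont_lim.
  by exists f; split=> //; apply/conv_subr.
- move=> [f [top_hom_f cc]].
  by exists f; split; [exact: top_hom_f.1 | apply/(conv_subr f top_hom_f)].
- move=> [f [hom_f cc]]; exists f; split; first by split=> //; apply: cont_lim.
  split; [exact: conv_continuous_pointwise cc | exact: conv_continuous_uniform_near0 cc].
- move=> [f [[hom_f _] [pw un]]]; exists f; split=> //.
  exact: pointwise_uniform_near0_conv_continuous.
Qed.
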